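(* Let $\mathcal D=\{(x_i,a_i^w,a_i^l)\}_{i=1}^n$ be a finite set of preference pairs ($a_i^w$ preferred to $a_i^l$) and $\Gamma:\mathcal X\times\mathcal A\to\mathbb R$ any function. For a policy $\pi$ with $\pi(a|x)>0$ for all $(x,a)$ define $$\mathcal L(\pi)=\sum_{i=1}^n\log\sigma\Big(\eta\log\frac{\pi(a_i^w|x_i)}{\pi_0(a_i^w|x_i)}-\eta\log\frac{\pi(a_i^l|x_i)}{\pi_0(a_i^l|x_i)}+\Gamma(x_i,a_i^w)-\Gamma(x_i,a_i^l)\Big),$$ and for a function $r:\mathcal X\times\mathcal A\to\mathbb R$ define $\ell(r)=\sum_{i=1}^n\log\sigma(r(x_i,a_i^w)-r(x_i,a_i^l))$. Then: (a) a full-support policy $\pi$ maximizes $\mathcal L$ over all full-support policies if and only if $r_\pi(x,a):=\eta\log\frac{\pi(a|x)}{\pi_0(a|x)}+\Gamma(x,a)$ maximizes $\ell$ over all functions $r$; (b) if $r^\dagger$ maximizes $\ell$ over all functions $r$, then the policy $\hat\pi(a|x)\propto\pi_0(a|x)\exp\big((r^\dagger(x,a)-\Gamma(x,a))/\eta\big)$ (i.e. the maximizer of $\mathbb E_{x,a\sim\pi}[r^\dagger(x,a)-\Gamma(x,a)]-\eta\,\mathbb E_x\mathrm{KL}(\pi(\cdot|x)\|\pi_0(\cdot|x))$) maximizes $\mathcal L$.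
   Context: $\mathcal X$ prompts, $\mathcal A$ a finite set of responses; $\pi_0$ a reference policy with $\pi_0(a|x)>0$ for all $(x,a)$; $\eta>0$; $\sigma(z)=1/(1+e^{-z})$. *)

From HB Require Import structures.
From mathcomp Require Import all_boot all_order all_algebra.
From mathcomp Require Import all_classical all_reals all_analysis.
Set Implicit Arguments. Unset Strict Implicit. Unset Printing Implicit Defensive.
Import Order.TTheory GRing.Theory Num.Theory.
Local Open Scope ring_scope.

Section Defs.
Variables (R : realType) (X : Type) (A : finType).

Definition sigmoid (z : R) : R := 1 / (1 + expR (- z)).

Definition full_support_policy (pi : X -> A -> R) : Prop :=
  forall x, (forall a, 0 < pi x a) /\ \sum_(a : A) pi x a = 1.

Variables (n : nat) (xs : 'I_n -> X) (aw al : 'I_n -> A).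

Definition ell (r : X -> A -> R) : R :=
  \sum_(i < n) ln (sigmoid (r (xs i) (aw i) - r (xs i) (al i))).

Variables (pi0 : X -> A -> R) (eta : R) (Gamma : X -> A -> R).

Definition Lpol (pi : X -> A -> R) : R :=
  \sum_(i < n) ln (sigmoid
     (eta * ln (pi (xs i) (aw i) / pi0 (xs i) (aw i))
      - eta * ln (pi (xs i) (al i) / pi0 (xs i) (al i))
      + Gamma (xs i) (aw i) - Gamma (xs i) (al i))).

Definition r_of (pi : X -> A -> R) : X -> A -> R :=
  fun x a => eta * ln (pi x a / pi0 x a) + Gamma x a.

Definition maximizes_L (pi : X -> A -> R) : Prop :=
  full_support_policy pi /\
  forall pi', full_support_policy pi' -> Lpol pi' <= Lpol pi.

Definition maximizes_ell (r : X -> A -> R) : Prop :=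
  forall r', ell r' <= ell r.

Definition gibbs_policy (r : X -> A -> R) : X -> A -> R :=
  fun x a => pi0 x a * expR ((r x a - Gamma x a) / eta) /
             \sum_(b : A) pi0 x b * expR ((r x b - Gamma x b) / eta).
End Defs.

From mathcomp Require Import all_boot all_order all_algebra.
From mathcomp Require Import all_classical all_reals all_analysis.
Import Order.TTheory GRing.Theory Num.Theory.
Local Open Scope ring_scope.

(* The objective of a policy is the likelihood of its implicit reward:
   L(pi) = ell(r_pi).  Conversely, for any reward r the Gibbs policy
   pi0 exp((r - Gamma)/eta) / Z has implicit reward r - eta ln Z, which
   differs from r by a per-prompt constant, and ell only sees reward
   differences at a common prompt.  Hence the set of values of L over
   full-support policies equals the set of values of ell over all rewards,
   which gives both (a) and (b). *)

Section ImplicitReward.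
Variables (R : realType) (X : Type) (A : finType).

Lemma full_support_weighted_sum_gt0 (p : X -> A -> R) (w : A -> R) (x : X) :
  full_support_policy p -> (forall a, 0 < w a) -> 0 < \sum_(a : A) p x a * w a.
Proof.
move=> /(_ x) [p_gt0 p_sum1] w_gt0.
have [a _] : exists a : A, true.
  have p_sum_neq0 : \sum_(a : A) p x a <> 0 by rewrite p_sum1; exact/eqP/oner_neq0.
  have [|a _] := psumr_neq0P _ p_sum_neq0; first by move=> a _; exact: ltW.
  by exists a.
rewrite (bigD1 a) //= ltr_wpDr ?mulr_gt0 //.
by apply: sumr_ge0 => b _; rewrite mulr_ge0 // ltW.
Qed.

Variables (n : nat) (xs : 'I_n -> X) (aw al : 'I_n -> A).

Lemma ell_subr_prompt (r : X -> A -> R) (c : X -> R) :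
  ell xs aw al (fun x a => r x a - c x) = ell xs aw al r.
Proof.
apply: eq_bigr => i _; congr (ln (sigmoid _)).
by rewrite opprB addrA subrK.
Qed.

Variables (pi0 : X -> A -> R) (eta : R) (Gamma : X -> A -> R).

Lemma Lpol_r_of (pi : X -> A -> R) :
  Lpol xs aw al pi0 eta Gamma pi = ell xs aw al (r_of pi0 eta Gamma pi).
Proof.
apply: eq_bigr => i _; congr (ln (sigmoid _)); rewrite /r_of.
by rewrite opprD !addrA; congr (_ + _); rewrite -!addrA [- _ + _]addrC.
Qed.

Hypotheses (pi0_full : full_support_policy pi0) (eta_gt0 : 0 < eta).

Let Z (r : X -> A -> R) (x : X) : R :=
  \sum_(b : A) pi0 x b * expR ((r x b - Gamma x b) / eta).

Let Z_gt0 (r : X -> A -> R) (x : X) : 0 < Z r x.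
Proof. by apply: full_support_weighted_sum_gt0 => // a; exact: expR_gt0. Qed.

Lemma gibbs_policy_full_support (r : X -> A -> R) :
  full_support_policy (gibbs_policy pi0 eta Gamma r).
Proof.
move=> x; have [pi0_gt0 _] := pi0_full x; split.
  by move=> a; rewrite divr_gt0 ?mulr_gt0 ?expR_gt0 ?Z_gt0.
by rewrite -mulr_suml mulfV // gt_eqF ?Z_gt0.
Qed.

Lemma r_of_gibbs_policy (r : X -> A -> R) :
  r_of pi0 eta Gamma (gibbs_policy pi0 eta Gamma r) =
  (fun x a => r x a - eta * ln (Z r x)).
Proof.
apply: funext => x; apply: funext => a.
have [pi0_gt0 _] := pi0_full x.
rewrite /r_of /gibbs_policy -/(Z r x).
rewrite mulrAC [pi0 x a * _]mulrC mulfK ?gt_eqF //.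
rewrite lnM ?posrE ?expR_gt0 ?invr_gt0 ?Z_gt0 // expRK lnV ?posrE ?Z_gt0 //.
by rewrite mulrDr mulrCA divff ?gt_eqF // mulr1 mulrN addrAC subrK.
Qed.

Lemma Lpol_gibbs_policy (r : X -> A -> R) :
  Lpol xs aw al pi0 eta Gamma (gibbs_policy pi0 eta Gamma r) = ell xs aw al r.
Proof.
by rewrite Lpol_r_of r_of_gibbs_policy (ell_subr_prompt r (fun x => eta * ln (Z r x))).
Qed.

End ImplicitReward.

Theorem proposition1 (R : realType) (X : Type) (A : finType) (n : nat)
  (xs : 'I_n -> X) (aw al : 'I_n -> A)
  (pi0 : X -> A -> R) (eta : R) (Gamma : X -> A -> R)
  (hpi0 : full_support_policy pi0) (heta : 0 < eta) :
  (forall pi : X -> A -> R, full_support_policy pi ->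
     (maximizes_L xs aw al pi0 eta Gamma pi <->
      maximizes_ell xs aw al (r_of pi0 eta Gamma pi))) /\
  (forall rdag : X -> A -> R, maximizes_ell xs aw al rdag ->
     maximizes_L xs aw al pi0 eta Gamma (gibbs_policy pi0 eta Gamma rdag)).
Proof.
have L_gibbs := @Lpol_gibbs_policy R X A n xs aw al pi0 eta Gamma hpi0 heta.
have gibbs_full := @gibbs_policy_full_support R X A pi0 eta Gamma hpi0.
have L_r_of := @Lpol_r_of R X A n xs aw al pi0 eta Gamma.
split=> [pi pi_full | r r_max].
  split=> [[_ pi_max] r | r_of_max].
    by rewrite -L_r_of -L_gibbs; exact: pi_max.
  by split=> // pi' _; rewrite !L_r_of.
by split=> // pi' _; rewrite L_gibbs L_r_of.
Qed.
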